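(* Let $r,n,m_1,m_2,L_1,L_2$ be positive integers with $L_1>m_1$ and $L_2>m_2$, and let $\mathbf{H}_{i,j}\in\mathcal{P}^{r\times n}$, $0\le i\le m_1$, $0\le j\le m_2$, be the component matrices of a two-dimensional spatially-coupled (2D-SC) code with parameters $(m_1,m_2,L_1,L_2)$. Suppose that $$\sum_{i=0}^{m_1-d_1}\sum_{j=0}^{m_2-d_2}\langle \mathbf{H}_{i,j},\mathbf{H}_{i+d_1,j+d_2}\rangle_s=\mathbf{0}_{r\times r}\quad\text{for all }0\le d_1\le m_1,\ 0\le d_2\le m_2,$$ and $$\sum_{i=0}^{m_1-d_1}\sum_{j=0}^{m_2-d_2}\langle \mathbf{H}_{i+d_1,j},\mathbf{H}_{i,j+d_2}\rangle_s=\mathbf{0}_{r\times r}\quad\text{for all }0\le d_1\le m_1,\ 0\le d_2\le m_2.$$ Then the 2D-SC code is a stabilizer code, i.e. the $N$-qubit Pauli operators given by the rows of its parity-check matrix pairwise commute.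
   Context: $\mathcal{P}$ denotes the single-qubit Pauli matrices $\{I,X,Y,Z\}$ (phases ignored). For single-qubit Paulis $P,Q$ the symplectic product $\langle P,Q\rangle_s\in\mathbb{F}_2$ is $0$ if $P$ and $Q$ commute (i.e. $P=I$, $Q=I$ or $P=Q$) and $1$ otherwise. For $\mathbf{P}\in\mathcal{P}^{m_1\times n}$, $\mathbf{Q}\in\mathcal{P}^{m_2\times n}$, $\langle\mathbf{P},\mathbf{Q}\rangle_s$ is the $m_1\times m_2$ binary matrix with $(i,j)$ entry $\sum_{k=1}^n\langle P_{i,k},Q_{j,k}\rangle_s \bmod 2$; this is $0$ exactly when the tensor-product Pauli operators given by row $i$ of $\mathbf{P}$ and row $j$ of $\mathbf{Q}$ commute. The (tail-biting) 2D-SC code with component matrices $\mathbf{H}_{i,j}$ and coupling lengths $L_1,L_2$ has the $rL_1L_2\times nL_1L_2$ parity-check matrix $\mathbf{H}$ (entries in $\mathcal{P}$) whose row blocks are indexed by $(a,b)\in\mathbb{Z}_{L_1}\times\mathbb{Z}_{L_2}$ and column blocks by $(c,d)\in\mathbb{Z}_{L_1}\times\mathbb{Z}_{L_2}$ (blocks ordered lexicographically), where the $((a,b),(c,d))$ block is $\mathbf{H}_{i,j}$ if there are $0\le i\le m_1$, $0\le j\le m_2$ with $i\equiv a-c \pmod{L_1}$ and $j\equiv b-d\pmod{L_2}$, and is the all-$I$ matrix otherwise. Each row of $\mathbf{H}$ is read as an $N=nL_1L_2$-qubit Pauli operator (tensor product of its entries). *)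

From mathcomp Require Import all_boot all_algebra.
Set Implicit Arguments. Unset Strict Implicit. Unset Printing Implicit Defensive.
Import GRing.Theory.
Local Open Scope ring_scope.

(* Single-qubit Pauli matrices, phases ignored. *)
Inductive Pauli := PI | PX | PY | PZ.

(* Symplectic product of single-qubit Paulis, valued in F_2:
   0 iff they commute (one is I, or they are equal). *)
Definition sympl (P Q : Pauli) : 'F_2 :=
  match P, Q with
  | PI, _ | _, PI => 0
  | PX, PX | PY, PY | PZ, PZ => 0
  | _, _ => 1
  end.

Definition sympl_mx (m1 m2 n : nat) (P : 'M[Pauli]_(m1, n)) (Q : 'M[Pauli]_(m2, n))
  : 'M['F_2]_(m1, m2) :=
  \matrix_(i, j) \sum_(k < n) sympl (P i k) (Q j k).

Lemma ltn_mod_of (i m r : nat) : (i < m * r)%N -> (i %% r < r)%N.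
Proof. by case: r => [|r]; rewrite ?muln0 // ltn_mod. Qed.

Definition omod (m r : nat) (i : 'I_(m * r)) : 'I_r :=
  Ordinal (ltn_mod_of (ltn_ord i)).

(* Tail-biting 2D-SC parity-check matrix, size (L1 L2 r) x (L1 L2 n).
   Row index R = (a*L2 + b)*r + k  (block (a,b), row k of the block),
   column index T = (c*L2 + d)*n + t (block (c,d), column t of the block),
   i.e. blocks ordered lexicographically.  Block ((a,b),(c,d)) is H i j where
   i = (a - c) mod L1 and j = (b - d) mod L2 are the unique representatives in
   [0,L1) and [0,L2) (unique since L1 > m1, L2 > m2), provided i <= m1 and
   j <= m2; otherwise it is the all-I matrix. *)
Definition sc_pcm (r n m1 m2 L1 L2 : nat) (H : nat -> nat -> 'M[Pauli]_(r, n))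
  : 'M[Pauli]_(L1 * L2 * r, L1 * L2 * n) :=
  \matrix_(R, T)
    let k := omod R in
    let t := omod T in
    let rb := (R %/ r)%N in
    let cb := (T %/ n)%N in
    let a := (rb %/ L2)%N in let b := (rb %% L2)%N in
    let c := (cb %/ L2)%N in let d := (cb %% L2)%N in
    let i := ((a + L1 - c) %% L1)%N in
    let j := ((b + L2 - d) %% L2)%N in
    if (i <= m1)%N && (j <= m2)%N then H i j k t else PI.

(* Entry ((a,b,k),(a',b',k')) of <H,H>_s is a sum over the column blocks (c,d)
   of the products of H_{a-c,b-d} and H_{a'-c,b'-d} (indices mod L1, L2), over
   the blocks where both index pairs lie in [0,m1] x [0,m2].  Since L1 > m1, the
   pair (a-c, a'-c) mod L1 is then either (i, i+e1) or (i+L1-e1, i), where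
   e1 = a'-a mod L1, and likewise in the second coordinate.  The entry thus
   splits into four double sums along shifted diagonals, each an entry of one
   of the two hypotheses or of its transpose. *)

From mathcomp Require Import all_boot all_algebra zify.
Import GRing.Theory.
Local Open Scope ring_scope.

Set Implicit Arguments. Unset Strict Implicit. Unset Printing Implicit Defensive.

Section OrdPair.
Variables p q : nat.

Lemma ord_pair_subproof (x : 'I_p) (y : 'I_q) : (x * q + y < p * q)%N.
Proof.
apply: (@leq_trans (x.+1 * q)); first by rewrite mulSn addnC ltn_add2r.
by rewrite leq_mul2r ltn_ord orbT.
Qed.

Definition ord_pair (x : 'I_p) (y : 'I_q) : 'I_(p * q) :=
  Ordinal (ord_pair_subproof x y).

Lemma ord_pair_div x y : (ord_pair x y %/ q)%N = x.
Proof. by rewrite /= divnMDl ?divn_small ?addn0 //; case: y => y /=; lia. Qed.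

Lemma ord_pair_mod x y : (ord_pair x y %% q)%N = y.
Proof. by rewrite /= modnMDl modn_small. Qed.

Lemma omod_pair x y : omod (ord_pair x y) = y.
Proof. by apply: val_inj; apply: ord_pair_mod. Qed.

Lemma ltn_div_of (i : 'I_(p * q)) : (i %/ q < p)%N.
Proof. by case: q i => [|q'] i; rewrite ?ltn_divLR //; case: i => /=; lia. Qed.

Definition odiv (i : 'I_(p * q)) : 'I_p := Ordinal (ltn_div_of i).

Lemma ord_pair_divmod i : ord_pair (odiv i) (omod i) = i.
Proof. by apply: val_inj; rewrite /= -divn_eq. Qed.

Variant ord_pair_spec : 'I_(p * q) -> Type :=
  OrdPairSpec x y : ord_pair_spec (ord_pair x y).

Lemma ord_pairP i : ord_pair_spec i.
Proof. by rewrite -[i]ord_pair_divmod. Qed.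

Lemma big_ord_pair (V : nmodType) (F : 'I_(p * q) -> V) :
  \sum_(i < p * q) F i = \sum_(x < p) \sum_(y < q) F (ord_pair x y).
Proof.
rewrite pair_big (reindex (fun u : 'I_p * 'I_q => ord_pair u.1 u.2)) //.
exists (fun i => (odiv i, omod i)) => [[x y] _ | i _]; last exact: ord_pair_divmod.
by rewrite omod_pair; congr (_, _); apply: val_inj; apply: ord_pair_div.
Qed.

End OrdPair.

(* The representative of [a - c] modulo [L]; the added [L] keeps the truncated
   subtraction exact, so this is meaningful only for [c <= a + L]. *)
Definition cdiff (L a c : nat) : nat := ((a + L - c) %% L)%N.

Section CyclicDifference.
Variable L : nat.

Lemma ltn_cdiff a c : (0 < L)%N -> (cdiff L a c < L)%N.
Proof. exact: ltn_pmod. Qed.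

Lemma cdiffE a c : (a < L)%N -> (c < L)%N ->
  cdiff L a c = if (c <= a)%N then (a - c)%N else (a + L - c)%N.
Proof.
move=> ltaL ltcL; rewrite /cdiff; case: leqP => [leca | ltac]; last by rewrite modn_small; lia.
by rewrite -addnBAC // modnDr modn_small; lia.
Qed.

Lemma cdiffK a c : (a < L)%N -> (c < L)%N -> cdiff L a (cdiff L a c) = c.
Proof.
move=> ltaL ltcL; have ltdL := ltn_cdiff a c (leq_ltn_trans (leq0n _) ltaL).
rewrite (cdiffE ltaL ltdL); rewrite (cdiffE ltaL ltcL) in ltdL *.
by case: (leqP c a) ltdL => ? ?; case: leqP; lia.
Qed.

Lemma cdiff_cdiff a a' c : (a < L)%N -> (a' < L)%N -> (c < L)%N ->
  let e := cdiff L a' a in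
  cdiff L a' (cdiff L a c) = if (c + e < L)%N then (c + e)%N else (c + e - L)%N.
Proof.
move=> ltaL lta'L ltcL /=; have ltdL := ltn_cdiff a c (leq_ltn_trans (leq0n _) ltaL).
rewrite (cdiffE lta'L ltdL) (cdiffE lta'L ltaL).
rewrite (cdiffE ltaL ltcL) in ltdL *.
by case: (leqP c a) ltdL => ? ?; case: (leqP a a') => ?; do 2 case: leqP => ?; lia.
Qed.

End CyclicDifference.

Definition diag_sum (V : nmodType) (m e : nat) (F : nat -> nat -> V) : V :=
  \sum_(0 <= i < m.+1 - e) F i (i + e).

Lemma diag_sum_widen (V : nmodType) m e n (F : nat -> nat -> V) : (m.+1 - e <= n)%N ->
  \sum_(0 <= i < n | (i + e <= m)%N) F i (i + e) = diag_sum m e F.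
Proof.
move=> le_n; rewrite /diag_sum (big_nat_widen _ _ _ _ _ le_n).
by apply: eq_bigl => i; rewrite ltn_subRL addnC ltnS.
Qed.

Lemma diag_sumD (V : nmodType) m e (F G : nat -> nat -> V) :
  diag_sum m e (fun i j => F i j + G i j) = diag_sum m e F + diag_sum m e G.
Proof. exact: big_split. Qed.

Lemma sum_cdiff_pair (V : nmodType) L m a a' (F : nat -> nat -> V) :
  (m < L)%N -> (a < L)%N -> (a' < L)%N ->
  \sum_(c < L | (cdiff L a c <= m)%N && (cdiff L a' c <= m)%N) F (cdiff L a c) (cdiff L a' c)
  = diag_sum m (cdiff L a' a) F + diag_sum m (L - cdiff L a' a)%N (fun i j => F j i).
Proof.
(* With [i := a - c], [a' - c] is [i + e] without wrap-around and [i + e - L]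
   with it; as [m < L] the two cases give the two diagonals. *)
move=> ltmL ltaL lta'L; have lt0L : (0 < L)%N by lia.
set e := cdiff L a' a; have leeL : (e <= L)%N by rewrite ltnW ?ltn_cdiff.
pose flip (c : 'I_L) : 'I_L := Ordinal (ltn_cdiff a c lt0L).
have flipK : involutive flip by move=> c; apply: val_inj; rewrite /= cdiffK.
rewrite (reindex_inj (inv_inj flipK)) /=.
pose v c := cdiff L a' (cdiff L a c).
have vE c : (c < L)%N -> v c = if (c + e < L)%N then (c + e)%N else (c + e - L)%N.
  by move=> ltcL; rewrite /v cdiff_cdiff.
transitivity (\sum_(0 <= c < L | (c <= m)%N && (v c <= m)%N) F c (v c)).
  by rewrite big_mkord; apply: eq_big => c; rewrite /= cdiffK.
rewrite (big_cat_nat _ (n := L - e)) ?leq_subr //=; congr (_ + _).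
  rewrite -(@diag_sum_widen _ m e (L - e)); last by lia.
  rewrite big_nat_cond [RHS]big_nat_cond.
  apply: eq_big => [c | c /andP[/andP[_ ltc] _]]; last by congr (F _ _); rewrite vE ?ifT; lia.
  by case: (ltnP c (L - e)) => ltc; rewrite ?andbF // vE ?ifT; lia.
rewrite (big_addn 0 L (L - e)) subKn // -(@diag_sum_widen _ m (L - e) e); last by lia.
rewrite big_nat_cond [RHS]big_nat_cond.
apply: eq_big => [j | j /andP[/andP[_ ltj] _]]; last by congr (F _ _); rewrite vE ?ifF; lia.
by case: (ltnP j e) => ltj; rewrite ?andbF // vE ?ifF; lia.
Qed.

Definition diag_sum2 (V : nmodType) (m1 m2 e1 e2 : nat) (X : nat -> nat -> nat -> nat -> V) :=
  diag_sum m1 e1 (fun i i' => diag_sum m2 e2 (fun j j' => X i j i' j')).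

Lemma diag_sum2_eq0 (V : nmodType) m1 m2 e1 e2 (X : nat -> nat -> nat -> nat -> V) :
  ((e1 <= m1)%N -> (e2 <= m2)%N ->
     \sum_(0 <= i < (m1 - e1).+1) \sum_(0 <= j < (m2 - e2).+1) X i j (i + e1)%N (j + e2)%N = 0) ->
  diag_sum2 m1 m2 e1 e2 X = 0.
Proof.
move=> hX; rewrite /diag_sum2 /diag_sum.
case: (leqP e1 m1) => [le1 | lt1]; last by rewrite big_geq //; lia.
case: (leqP e2 m2) => [le2 | lt2]; first by rewrite !subSn // hX.
by rewrite big1 // => i _; rewrite big_geq //; lia.
Qed.

Lemma sympl_mxIl r n m (Q : 'M[Pauli]_(m, n)) : sympl_mx (const_mx PI : 'M_(r, n)) Q = 0.
Proof. by apply/matrixP => i j; rewrite !mxE big1 // => k _; rewrite mxE. Qed.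

Lemma sympl_mxIr r n m (P : 'M[Pauli]_(r, n)) : sympl_mx P (const_mx PI : 'M_(m, n)) = 0.
Proof. by apply/matrixP => i j; rewrite !mxE big1 // => k _; rewrite mxE; case: (P i k). Qed.

Lemma tr_sympl_mx r n m (P : 'M[Pauli]_(r, n)) (Q : 'M[Pauli]_(m, n)) :
  (sympl_mx P Q)^T = sympl_mx Q P.
Proof.
by apply/matrixP => i j; rewrite !mxE; apply: eq_bigr => k _; case: (P j k); case: (Q i k).
Qed.

Lemma sum_sympl_mx_swap r n m I J (s : seq I) (s' : seq J)
    (P : I -> J -> 'M[Pauli]_(r, n)) (Q : I -> J -> 'M[Pauli]_(m, n)) :
  \sum_(i <- s) \sum_(j <- s') sympl_mx (Q i j) (P i j)
  = (\sum_(i <- s) \sum_(j <- s') sympl_mx (P i j) (Q i j))^T.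
Proof.
rewrite raddf_sum; apply: eq_bigr => i _.
by rewrite raddf_sum; apply: eq_bigr => j _; rewrite /= tr_sympl_mx.
Qed.

Lemma sympl_mx_if r n m (b b' : bool) (P : 'M[Pauli]_(r, n)) (Q : 'M[Pauli]_(m, n)) :
  sympl_mx (if b then P else const_mx PI) (if b' then Q else const_mx PI)
  = if b && b' then sympl_mx P Q else 0.
Proof. by case: b; case: b'; rewrite ?sympl_mxIl ?sympl_mxIr. Qed.

Section SpatiallyCoupledCode.
Variables (r n m1 m2 L1 L2 : nat) (H : nat -> nat -> 'M[Pauli]_(r, n)).

Definition sc_block (a b c d : nat) : 'M[Pauli]_(r, n) :=
  if (cdiff L1 a c <= m1)%N && (cdiff L2 b d <= m2)%N
  then H (cdiff L1 a c) (cdiff L2 b d) else const_mx PI.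

Lemma sc_pcm_pair (a : 'I_L1) (b : 'I_L2) (k : 'I_r) c d t :
  sc_pcm m1 m2 L1 L2 H (ord_pair (ord_pair a b) k) (ord_pair (ord_pair c d) t)
  = sc_block a b c d k t.
Proof.
rewrite mxE; cbv beta zeta; rewrite !ord_pair_div !ord_pair_mod /sc_block /cdiff.
by rewrite !omod_pair; case: ifP; rewrite ?mxE.
Qed.

Lemma sympl_mx_sc_pcm (a a' : 'I_L1) (b b' : 'I_L2) (k k' : 'I_r) :
  sympl_mx (sc_pcm m1 m2 L1 L2 H) (sc_pcm m1 m2 L1 L2 H)
    (ord_pair (ord_pair a b) k) (ord_pair (ord_pair a' b') k')
  = (\sum_(c < L1) \sum_(d < L2) sympl_mx (sc_block a b c d) (sc_block a' b' c d)) k k'.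
Proof.
rewrite mxE !big_ord_pair summxE; apply: eq_bigr => c _.
rewrite summxE; apply: eq_bigr => d _.
by rewrite mxE; apply: eq_bigr => t _; rewrite !sc_pcm_pair.
Qed.

Lemma sum_sympl_mx_sc_block (a a' : 'I_L1) (b b' : 'I_L2) : (m1 < L1)%N -> (m2 < L2)%N ->
  let e1 := cdiff L1 a' a in let e2 := cdiff L2 b' b in
  \sum_(c < L1) \sum_(d < L2) sympl_mx (sc_block a b c d) (sc_block a' b' c d) =
    diag_sum2 m1 m2 e1 e2 (fun i j i' j' => sympl_mx (H i j) (H i' j'))
  + diag_sum2 m1 m2 e1 (L2 - e2) (fun i j i' j' => sympl_mx (H i j') (H i' j))
  + diag_sum2 m1 m2 (L1 - e1) e2 (fun i j i' j' => sympl_mx (H i' j) (H i j'))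
  + diag_sum2 m1 m2 (L1 - e1) (L2 - e2) (fun i j i' j' => sympl_mx (H i' j') (H i j)).
Proof.
move=> ltm1 ltm2 e1 e2.
transitivity (\sum_(c < L1 | (cdiff L1 a c <= m1)%N && (cdiff L1 a' c <= m1)%N)
  \sum_(d < L2 | (cdiff L2 b d <= m2)%N && (cdiff L2 b' d <= m2)%N)
    sympl_mx (H (cdiff L1 a c) (cdiff L2 b d)) (H (cdiff L1 a' c) (cdiff L2 b' d))).
  rewrite /sc_block [RHS]big_mkcond; apply: eq_bigr => c _.
  case: ifP => hc; last by apply: big1 => d _; rewrite sympl_mx_if andbACA hc.
  by rewrite [RHS]big_mkcond; apply: eq_bigr => d _; rewrite sympl_mx_if andbACA hc.
under eq_bigr => c _ do rewrite (sum_cdiff_pair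
  (fun j j' => sympl_mx (H (cdiff L1 a c) j) (H (cdiff L1 a' c) j')) ltm2 (ltn_ord b) (ltn_ord b')).
rewrite (sum_cdiff_pair (fun i i' =>
    diag_sum m2 e2 (fun j j' => sympl_mx (H i j) (H i' j'))
  + diag_sum m2 (L2 - e2) (fun j j' => sympl_mx (H i j') (H i' j))) ltm1 (ltn_ord a) (ltn_ord a')).
by rewrite !diag_sumD addrA.
Qed.

End SpatiallyCoupledCode.

Theorem theorem1 (r n m1 m2 L1 L2 : nat) (H : nat -> nat -> 'M[Pauli]_(r, n)) :
  (0 < r)%N -> (0 < n)%N -> (0 < m1)%N -> (0 < m2)%N ->
  (m1 < L1)%N -> (m2 < L2)%N ->
  (forall d1 d2 : nat, (d1 <= m1)%N -> (d2 <= m2)%N ->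
     \sum_(0 <= i < (m1 - d1).+1) \sum_(0 <= j < (m2 - d2).+1)
        sympl_mx (H i j) (H (i + d1)%N (j + d2)%N) = 0) ->
  (forall d1 d2 : nat, (d1 <= m1)%N -> (d2 <= m2)%N ->
     \sum_(0 <= i < (m1 - d1).+1) \sum_(0 <= j < (m2 - d2).+1)
        sympl_mx (H (i + d1)%N j) (H i (j + d2)%N) = 0) ->
  sympl_mx (sc_pcm m1 m2 L1 L2 H) (sc_pcm m1 m2 L1 L2 H) = 0.
Proof.
move=> _ _ _ _ ltm1 ltm2 comm_diag comm_antidiag.
apply/matrixP => R R'.
case: (ord_pairP R) => ab k; case: (ord_pairP ab) => a b.
case: (ord_pairP R') => ab' k'; case: (ord_pairP ab') => a' b'.
rewrite sympl_mx_sc_pcm sum_sympl_mx_sc_block //.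
rewrite !diag_sum2_eq0 ?addr0 ?mxE // => le1 le2.
- by rewrite sum_sympl_mx_swap comm_diag ?trmx0.
- exact: comm_antidiag.
- by rewrite sum_sympl_mx_swap comm_antidiag ?trmx0.
- exact: comm_diag.
Qed.
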